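(* Let $R$ be a commutative semiring and $v:R\to M$ a surjective m-valuation. (i) If $\varphi$ is any supervaluation covering $v$, then $\varphi(a)$ is ghost for every $a\in Y(v)$. (ii) If $Y(v)=\emptyset$, then every surjective m-supervaluation covering $v$ is a supervaluation.
   Context: A bipotent semiring $M$: commutative monoid with absorbing $0$, total order compatible with multiplication, $0$ least, $x+y=\max(x,y)$. An m-valuation: multiplicative $v:R\to M$ with $v(0)=0$, $v(1)=1$, $v(a+b)\le\max(v(a),v(b))$. A supertropical monoid is a commutative monoid $U$ with absorbing $0$, idempotent $e$ with $ex=0\Rightarrow x=0$, and a total order on $eU$ making it a bipotent semiring; elements of $eU$ are ghost. It is a semiring if the addition $x+y:=y$ ($ex<ey$), $x$ ($ex>ey$), $ex$ ($ex=ey$) is associative and distributive. An m-supervaluation is a map $\varphi:R\to U$ with $\varphi(0)=0$, $\varphi(1)=1$, multiplicative, $e\varphi(a+b)\le\max(e\varphi(a),e\varphi(b))$; it covers $v$ if $eU=M$ and $e\varphi=v$; it is surjective if $U=\varphi(R)\cup e\varphi(R)$; it is a supervaluation if $U$ is a semiring. $Y(v):=\{ab: a,b\in R,\ \exists a'\in R\text{ with } v(a')<v(a),\ v(a'b)=v(ab)\neq0\}$. *)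

From HB Require Import structures.
From mathcomp Require Import all_boot all_algebra.
Set Implicit Arguments. Unset Strict Implicit. Unset Printing Implicit Defensive.
Import GRing.Theory.
Local Open Scope ring_scope.

(** Bipotent semiring: commutative monoid with absorbing 0, total order
    compatible with multiplication, 0 least; addition is max. *)
Record BipotentSemiring := {
  bs_car :> Type;
  bs_mul : bs_car -> bs_car -> bs_car;
  bs_one : bs_car;
  bs_zero : bs_car;
  bs_le : bs_car -> bs_car -> bool;
  bs_mulA : forall x y z, bs_mul x (bs_mul y z) = bs_mul (bs_mul x y) z;
  bs_mulC : forall x y, bs_mul x y = bs_mul y x;
  bs_mul1 : forall x, bs_mul bs_one x = x;
  bs_mul0 : forall x, bs_mul bs_zero x = bs_zero;
  bs_le_refl : forall x, bs_le x x;
  bs_le_anti : forall x y, bs_le x y -> bs_le y x -> x = y;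
  bs_le_trans : forall x y z, bs_le x y -> bs_le y z -> bs_le x z;
  bs_le_total : forall x y, bs_le x y || bs_le y x;
  bs_le_mul : forall x y z, bs_le x y -> bs_le (bs_mul x z) (bs_mul y z);
  bs_le0 : forall x, bs_le bs_zero x
}.

Definition bs_max (M : BipotentSemiring) (x y : M) : M :=
  if bs_le x y then y else x.
Definition bs_lt (M : BipotentSemiring) (x y : M) : Prop :=
  bs_le x y /\ x <> y.

Definition m_valuation (R : comPzSemiRingType) (M : BipotentSemiring)
  (v : R -> M) : Prop :=
  [/\ v 0 = bs_zero M, v 1 = bs_one M,
      forall a b, v (a * b) = bs_mul (v a) (v b) &
      forall a b, bs_le (v (a + b)) (bs_max (v a) (v b))].

Definition valuation_surjective (R : Type) (M : BipotentSemiring) (v : R -> M) :=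
  forall m : M, exists a, v a = m.

Definition in_Y (R : comPzSemiRingType) (M : BipotentSemiring) (v : R -> M)
  (c : R) : Prop :=
  exists a b, c = a * b /\
    exists a', bs_lt (v a') (v a) /\ v (a' * b) = v (a * b) /\
               v (a * b) <> bs_zero M.

(** The relation st_le is only meaningful on eU. *)
Record SupertropicalMonoid := {
  st_car :> Type;
  st_mul : st_car -> st_car -> st_car;
  st_one : st_car;
  st_zero : st_car;
  st_e : st_car;
  st_le : st_car -> st_car -> bool;
  st_mulA : forall x y z, st_mul x (st_mul y z) = st_mul (st_mul x y) z;
  st_mulC : forall x y, st_mul x y = st_mul y x;
  st_mul1 : forall x, st_mul st_one x = x;
  st_mul0 : forall x, st_mul st_zero x = st_zero;
  st_ee : st_mul st_e st_e = st_e;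
  st_e0 : forall x, st_mul st_e x = st_zero -> x = st_zero;
  st_le_refl : forall x, st_mul st_e x = x -> st_le x x;
  st_le_anti : forall x y, st_mul st_e x = x -> st_mul st_e y = y ->
      st_le x y -> st_le y x -> x = y;
  st_le_trans : forall x y z, st_mul st_e x = x -> st_mul st_e y = y ->
      st_mul st_e z = z -> st_le x y -> st_le y z -> st_le x z;
  st_le_total : forall x y, st_mul st_e x = x -> st_mul st_e y = y ->
      st_le x y || st_le y x;
  st_le_mul : forall x y z, st_mul st_e x = x -> st_mul st_e y = y ->
      st_mul st_e z = z -> st_le x y -> st_le (st_mul x z) (st_mul y z);
  st_le0 : forall x, st_mul st_e x = x -> st_le st_zero x
}.

Definition ghost (U : SupertropicalMonoid) (x : U) : Prop := st_mul (st_e U) x = x.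

Definition st_lt (U : SupertropicalMonoid) (x y : U) : bool :=
  st_le x y && ~~ st_le y x.

Definition st_max (U : SupertropicalMonoid) (x y : U) : U :=
  if st_le x y then y else x.

Definition st_add (U : SupertropicalMonoid) (x y : U) : U :=
  let ex := st_mul (st_e U) x in
  let ey := st_mul (st_e U) y in
  if st_lt ex ey then y else if st_lt ey ex then x else ex.

Definition st_is_semiring (U : SupertropicalMonoid) : Prop :=
  (forall x y z : U, st_add x (st_add y z) = st_add (st_add x y) z) /\
  (forall x y z : U, st_mul x (st_add y z) = st_add (st_mul x y) (st_mul x z)).

Definition m_supervaluation (R : comPzSemiRingType) (U : SupertropicalMonoid)
  (phi : R -> U) : Prop :=
  [/\ phi 0 = st_zero U, phi 1 = st_one U,
      forall a b, phi (a * b) = st_mul (phi a) (phi b) &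
      forall a b, st_le (st_mul (st_e U) (phi (a + b)))
                        (st_max (st_mul (st_e U) (phi a)) (st_mul (st_e U) (phi b)))].

Definition supervaluation (R : comPzSemiRingType) (U : SupertropicalMonoid)
  (phi : R -> U) : Prop := m_supervaluation phi /\ st_is_semiring U.

Definition sv_surjective (R : Type) (U : SupertropicalMonoid) (phi : R -> U) :=
  forall x : U, exists a, x = phi a \/ x = st_mul (st_e U) (phi a).

(** phi covers v, where the equality eU = M (as bipotent semirings) is made
    explicit by an identification iota : M -> U, a bijection onto eU
    preserving multiplication, unit (1_M |-> e), zero and order, and
    e * phi = iota o v. *)
Definition covers (R : Type) (M : BipotentSemiring) (U : SupertropicalMonoid)
  (v : R -> M) (phi : R -> U) (iota : M -> U) : Prop :=
  [/\ injective iota,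
      forall x : U, ghost x <-> exists m, x = iota m,
      forall m n, iota (bs_mul m n) = st_mul (iota m) (iota n),
      iota (bs_one M) = st_e U /\ iota (bs_zero M) = st_zero U &
      forall m n, bs_le m n = st_le (iota m) (iota n) /\
      forall a, st_mul (st_e U) (phi a) = iota (v a)].

(** Supertropical addition is always associative, so being a semiring is
    a matter of distributivity alone. Distributivity can only fail when
    multiplication by [z] collapses a strict inequality [e x < e y] to an
    equality [e (z x) = e (z y)]: then [z (x + y) = z y] while
    [z x + z y = e (z y)], so distributivity holds iff [z y] is ghost in every
    such collapse. For [z = phi b], [x = phi a'], [y = phi a] the collapse
    [v a' < v a], [v (a' b) = v (a b) <> 0] is precisely membership of [a b]
    in [Y(v)]; this gives (i), and when [Y(v)] is empty and [phi] is
    surjective every collapse is of this form up to ghost factors or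
    a zero product, which gives (ii). *)
From mathcomp Require Import all_boot all_algebra.
From Stdlib Require Import Classical.

Set Implicit Arguments. Unset Strict Implicit. Unset Printing Implicit Defensive.
Import GRing.Theory.
Local Open Scope ring_scope.

Section SupertropicalMonoidTheory.

Variable U : SupertropicalMonoid.
Local Notation e := (st_e U).
Implicit Types x y z w : U.

Lemma st_mulCA x y z : st_mul x (st_mul y z) = st_mul y (st_mul x z).
Proof. by rewrite st_mulA (st_mulC x y) -st_mulA. Qed.

Lemma st_eK x : st_mul e (st_mul e x) = st_mul e x.
Proof. by rewrite st_mulA st_ee. Qed.

Lemma st_eM x y : st_mul e (st_mul x y) = st_mul (st_mul e x) (st_mul e y).
Proof. by rewrite -st_mulA (st_mulCA x) st_eK. Qed.

Lemma ghost_e x : ghost (st_mul e x).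
Proof. exact: st_eK. Qed.

Lemma ghost_mull x y : ghost x -> ghost (st_mul x y).
Proof. by rewrite /ghost st_mulA => ->. Qed.

Lemma ghost_mulr x y : ghost y -> ghost (st_mul x y).
Proof. by rewrite st_mulC; apply: ghost_mull. Qed.

Lemma ghost0 : ghost (st_zero U).
Proof. by rewrite /ghost st_mulC st_mul0. Qed.

Lemma st_ltxx x : st_lt x x = false.
Proof. by rewrite /st_lt andbN. Qed.

Lemma st_ltW x y : st_lt x y -> st_le x y.
Proof. by case/andP. Qed.

Lemma st_lt_trans x y z : ghost x -> ghost y -> ghost z ->
  st_lt x y -> st_lt y z -> st_lt x z.
Proof.
move=> gx gy gz /andP[le_xy nle_yx] /andP[le_yz nle_zy]; apply/andP; split.
  exact: st_le_trans gx gy gz le_xy le_yz.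
apply: contra nle_yx => le_zx; exact: st_le_trans gy gz gx le_yz le_zx.
Qed.

Variant st_cmp_spec x y : bool -> bool -> Prop :=
  | StCmpLt of st_lt x y : st_cmp_spec x y true false
  | StCmpGt of st_lt y x : st_cmp_spec x y false true
  | StCmpEq of x = y : st_cmp_spec x y false false.

Lemma st_cmpP x y : ghost x -> ghost y -> st_cmp_spec x y (st_lt x y) (st_lt y x).
Proof.
move=> gx gy; rewrite /st_lt.
case le_xy: (st_le x y); case le_yx: (st_le y x) => /=.
- by constructor; exact: st_le_anti gx gy le_xy le_yx.
- by constructor; rewrite /st_lt le_xy le_yx.
- by constructor; rewrite /st_lt le_xy le_yx.
- by have := st_le_total gx gy; rewrite le_xy le_yx.
Qed.

Lemma st_add_lt x y : st_lt (st_mul e x) (st_mul e y) -> st_add x y = y.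
Proof. by rewrite /st_add => ->. Qed.

Lemma st_add_gt x y : st_lt (st_mul e y) (st_mul e x) -> st_add x y = x.
Proof.
rewrite /st_add => lt_yx; rewrite lt_yx.
by case/andP: lt_yx => _ /negbTE; rewrite /st_lt => ->.
Qed.

Lemma st_add_eq x y : st_mul e x = st_mul e y -> st_add x y = st_mul e x.
Proof. by rewrite /st_add => ->; rewrite st_ltxx. Qed.

Lemma st_addA x y z : st_add x (st_add y z) = st_add (st_add x y) z.
Proof.
have gx := ghost_e x; have gy := ghost_e y; have gz := ghost_e z.
case: (st_cmpP gx gy) => [xy|yx|xy]; case: (st_cmpP gy gz) => [yz|zy|yz].
- have xz := st_lt_trans gx gy gz xy yz.
  by rewrite (st_add_lt yz) (st_add_lt xy) (st_add_lt yz) (st_add_lt xz).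
- by rewrite (st_add_gt zy) (st_add_lt xy) (st_add_gt zy).
- by rewrite (st_add_eq yz) (st_add_lt xy) (st_add_eq yz) st_add_lt ?st_eK.
- by rewrite (st_add_lt yz) (st_add_gt yx).
- have zx := st_lt_trans gz gy gx zy yx.
  by rewrite (st_add_gt zy) (st_add_gt yx) (st_add_gt zx).
- have zx : st_lt (st_mul e z) (st_mul e x) by rewrite -yz.
  by rewrite (st_add_eq yz) (st_add_gt yx) (st_add_gt zx) st_add_gt ?st_eK.
- have xz : st_lt (st_mul e x) (st_mul e z) by rewrite xy.
  by rewrite (st_add_lt yz) (st_add_eq xy) (st_add_lt xz) st_add_lt ?st_eK.
- have zx : st_lt (st_mul e z) (st_mul e x) by rewrite xy.
  by rewrite (st_add_gt zy) (st_add_eq xy) st_add_gt ?st_eK.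
- rewrite (st_add_eq yz) (st_add_eq xy) !st_add_eq ?st_eK //.
  by rewrite xy.
Qed.

Definition st_distributive :=
  forall x y z, st_mul x (st_add y z) = st_add (st_mul x y) (st_mul x z).

Definition collapse_ghost :=
  forall x y z, st_lt (st_mul e x) (st_mul e y) ->
    st_mul e (st_mul z x) = st_mul e (st_mul z y) -> ghost (st_mul z y).

Lemma st_le_mule x y z : st_le (st_mul e x) (st_mul e y) ->
  st_le (st_mul e (st_mul z x)) (st_mul e (st_mul z y)).
Proof.
move=> le_xy; rewrite !(st_mulC z) !st_eM.
exact: st_le_mul (ghost_e x) (ghost_e y) (ghost_e z) le_xy.
Qed.

Lemma collapse_ghost_of_distributive : st_distributive -> collapse_ghost.
Proof.
move=> distr x y z lt_xy collapse.
have := distr z x y; rewrite (st_add_lt lt_xy) (st_add_eq collapse) collapse.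
by move=> ->; apply: ghost_e.
Qed.

Lemma distributive_of_collapse_ghost : collapse_ghost -> st_distributive.
Proof.
move=> collapse w y z.
have gwy := ghost_e (st_mul w y); have gwz := ghost_e (st_mul w z).
have no_inversion p q : st_lt (st_mul e p) (st_mul e q) ->
    st_lt (st_mul e (st_mul w q)) (st_mul e (st_mul w p)) = false.
  by move=> /st_ltW /(st_le_mule w) le_pq; rewrite /st_lt le_pq andbF.
case: (st_cmpP (ghost_e y) (ghost_e z)) => [yz|zy|yz].
- rewrite (st_add_lt yz); move: (no_inversion _ _ yz).
  case: (st_cmpP gwy gwz) => [wyz|//|wyz] _; first by rewrite (st_add_lt wyz).
  by rewrite (st_add_eq wyz) wyz (collapse _ _ _ yz wyz).
- rewrite (st_add_gt zy); move: (no_inversion _ _ zy).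
  case: (st_cmpP gwy gwz) => [//|wzy|wyz] _; first by rewrite (st_add_gt wzy).
  by rewrite (st_add_eq wyz) (collapse _ _ _ zy (esym wyz)).
- have wyz : st_mul e (st_mul w y) = st_mul e (st_mul w z) by rewrite !st_eM yz.
  by rewrite (st_add_eq yz) (st_add_eq wyz) st_mulCA.
Qed.

Lemma st_is_semiringP : st_is_semiring U <-> collapse_ghost.
Proof.
split=> [[_ distr]|collapse]; first exact: collapse_ghost_of_distributive.
split; [exact: st_addA | exact: distributive_of_collapse_ghost].
Qed.

End SupertropicalMonoidTheory.

Section Covering.

Variables (R : comPzSemiRingType) (M : BipotentSemiring) (U : SupertropicalMonoid).
Variables (v : R -> M) (phi : R -> U) (iota : M -> U).
Hypothesis cover : covers v phi iota.
Local Notation e := (st_e U).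

Lemma covers_e a : st_mul e (phi a) = iota (v a).
Proof. by case: cover => _ _ _ _ /(_ (bs_one M) (bs_one M)) []. Qed.

Lemma covers_lt a b :
  st_lt (st_mul e (phi a)) (st_mul e (phi b)) <-> bs_lt (v a) (v b).
Proof.
case: cover => _ _ _ _ le_iota; rewrite !covers_e /st_lt.
rewrite -!(proj1 (le_iota _ _)); split=> [/andP[le_ab nle_ba]|[le_ab neq_ab]].
  by split=> // eq_ab; move: nle_ba; rewrite eq_ab bs_le_refl.
by rewrite le_ab; apply/negP => le_ba; apply: neq_ab; apply: bs_le_anti.
Qed.

Lemma covers_eq a b :
  st_mul e (phi a) = st_mul e (phi b) -> v a = v b.
Proof. by case: cover => inj_iota _ _ _ _; rewrite !covers_e => /inj_iota. Qed.

Lemma covers_zero a : v a = bs_zero M -> phi a = st_zero U.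
Proof.
case: cover => _ _ _ [_ iota0] _ va0.
by apply: st_e0; rewrite covers_e va0 iota0.
Qed.

Hypothesis phiM : forall a b, phi (a * b) = st_mul (phi a) (phi b).

Lemma collapse_in_Y a a' b :
  st_lt (st_mul e (phi a')) (st_mul e (phi a)) ->
  st_mul e (st_mul (phi b) (phi a')) = st_mul e (st_mul (phi b) (phi a)) ->
  in_Y v (a * b) \/ v (a * b) = bs_zero M.
Proof.
rewrite -!phiM covers_lt => lt_a'a /covers_eq eq_ba'.
have [->|nz] := classic (v (a * b) = bs_zero M); [by right | left].
exists a, b; split=> //; exists a'.
by rewrite (mulrC a' b) (mulrC a b) in nz *.
Qed.

Lemma covers_collapse_ghost :
  st_is_semiring U -> forall c, in_Y v c -> ghost (phi c).
Proof.
move=> /st_is_semiringP collapse _ [a [b [-> [a' [lt_a'a [eq_ab nz]]]]]].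
rewrite mulrC phiM; apply: collapse (phi a') _ _ _ _.
  exact/covers_lt.
by rewrite -!phiM !(mulrC b) !covers_e eq_ab.
Qed.

Hypothesis phi_onto : sv_surjective phi.

Lemma covers_e_onto x : exists a, st_mul e x = st_mul e (phi a).
Proof. by have [a [->|->]] := phi_onto x; exists a; rewrite ?st_eK. Qed.

Lemma empty_Y_collapse_ghost : (forall c, ~ in_Y v c) -> collapse_ghost U.
Proof.
move=> noY x y z.
have [b [->|->]] := phi_onto y; last by move=> _ _; apply/ghost_mulr/ghost_e.
have [c [->|->]] := phi_onto z; last by move=> _ _; apply/ghost_mull/ghost_e.
have [a ex] := covers_e_onto x.
rewrite st_eM ex -st_eM => lt_xy collapse; rewrite -phiM.
have [/noY//|vbc0] := collapse_in_Y lt_xy collapse.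
by rewrite mulrC (covers_zero vbc0); apply: ghost0.
Qed.

End Covering.

Theorem theorem6p12 (R : comPzSemiRingType) (M : BipotentSemiring) (v : R -> M)
  (hv : m_valuation v) (hsurj : valuation_surjective v) :
  (forall (U : SupertropicalMonoid) (phi : R -> U) (iota : M -> U),
      supervaluation phi -> covers v phi iota ->
      forall c : R, in_Y v c -> ghost (phi c)) /\
  ((forall c : R, ~ in_Y v c) ->
   forall (U : SupertropicalMonoid) (phi : R -> U) (iota : M -> U),
      m_supervaluation phi -> sv_surjective phi -> covers v phi iota ->
      st_is_semiring U).
Proof.
split.
- move=> U phi iota [[_ _ phiM _] semiring] cover.
  exact: covers_collapse_ghost cover phiM semiring.
- move=> noY U phi iota [_ _ phiM _] onto cover.
  exact/st_is_semiringP/(empty_Y_collapse_ghost cover phiM onto noY).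
Qed.
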